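(* Let $1\le p<\infty$ and let $X=\ell_p(\mathbb Z_+)$ (real or complex). Let $\mathbf w=(w_n)_{n\ge1}$ be a bounded sequence of non-zero scalars and let $B_{\mathbf w}$ be the weighted backward shift on $X$. Then $B_{\mathbf w}$ admits a Borel probability measure $m$ on $X$ which is $B_{\mathbf w}$-invariant and different from the Dirac mass $\delta_0$ if and only if $\sum_{n=1}^\infty \frac{1}{|w_1\cdots w_n|^p}<\infty$.
   Context: $(e_n)_{n\ge0}$ is the canonical basis of $\ell_p(\mathbb Z_+)$. The weighted backward shift is defined by $B_{\mathbf w}e_0=0$ and $B_{\mathbf w}e_n=w_ne_{n-1}$ for $n\ge1$. A Borel probability measure $m$ is $B_{\mathbf w}$-invariant if $m(B_{\mathbf w}^{-1}(A))=m(A)$ for every Borel set $A\subseteq X$. *)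

From HB Require Import structures.
From mathcomp Require Import all_boot all_order all_algebra.
From mathcomp Require Import all_classical all_reals all_analysis.
From mathcomp.real_closed Require Import complex.

Set Implicit Arguments.
Unset Strict Implicit.
Unset Printing Implicit Defensive.

Import Order.TTheory GRing.Theory Num.Theory.
Local Open Scope classical_set_scope.
Local Open Scope ring_scope.

(* The sequence space l_p(Z_+) over a scalar ring K equipped with an   *)
(* absolute value absv : K -> R (instantiated below with K = R and     *)
Section LpSpace.
Variables (R : realType) (K : nzRingType) (absv : K -> R).
Hypothesis absv0 : absv 0 = 0.
Variables (p : R) (hp : 1 <= p).

Definition lp_sum (x : nat -> K) : \bar R :=
  (\sum_(0 <= n <oo) ((absv (x n)) `^ p)%:E)%E.

Definition in_lp (x : nat -> K) : bool := `[< (lp_sum x < +oo)%E >].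

Definition lp_seq := {x : nat -> K | in_lp x}.
(* the type is indexed by the (proof-irrelevant) side conditions so that
   its pointed structure (the zero sequence) can be found by inference *)
Definition lp of absv 0 = 0 & 1 <= p := lp_seq.
HB.instance Definition _ := Choice.copy (lp absv0 hp) lp_seq.


Lemma in_lp0 : in_lp (fun _ => 0).
Proof.
apply/asboolP; rewrite /lp_sum absv0 powR0; last first.
  by apply/eqP => p0; move: hp; rewrite p0 ler10.
by rewrite eseries0 // ltry.
Qed.

Definition lp_zero : lp absv0 hp := exist _ (fun _ => 0) in_lp0.

HB.instance Definition _ := isPointed.Build (lp absv0 hp) lp_zero.

Definition lp_norm (x : nat -> K) : R := (fine (lp_sum x)) `^ p^-1.
Definition lp_dist (x y : lp absv0 hp) : R := lp_norm (fun n => sval x n - sval y n).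

Definition lp_open (A : set (lp absv0 hp)) : Prop :=
  forall x, A x -> exists e : R, 0 < e /\ forall y, lp_dist x y < e -> A y.

Definition lp_borel := g_sigma_algebraType lp_open.

(* the weighted backward shift: (B_w x)_n = w_{n+1} x_{n+1}, so that
   B_w e_0 = 0 and B_w e_n = w_n e_{n-1}.  When the weight sequence is
   bounded the shifted sequence is in l_p; otherwise (never used) the
   default value 0 is returned. *)
Definition bshift (w : nat -> K) (x : lp_borel) : lp_borel :=
  insubd (lp_zero : lp_seq) (fun n => w n.+1 * sval x n.+1).

End LpSpace.

Definition lpR (R : realType) (p : R) (hp : 1 <= p) :=
  @lp_borel R R (@Num.norm R R) (@normr0 R R) p hp.
Definition lpC (R : realType) (p : R) (hp : 1 <= p) :=
  @lp_borel R R[i] (@Normc.normc R) (@Normc.normc0 R) p hp.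

From mathcomp Require Import all_boot all_order all_algebra.
From mathcomp Require Import all_classical all_reals all_analysis.
From mathcomp Require Import measurable_realfun.
From mathcomp Require Import lra.
From mathcomp.real_closed Require Import complex.
Import Order.TTheory GRing.Theory Num.Theory.
Local Open Scope classical_set_scope.
Local Open Scope ring_scope.

(* Write W_n = w_1 ... w_n.  If sum_n |W_n|^-p is finite, the sequence (W_n^-1)_n lies in
   l_p and is fixed by B_w, so the Dirac mass at it is invariant and differs from the
   Dirac mass at 0.  Conversely, let m be invariant and C_n = {x : c < |W_n x_n|}.  As
   B_w^-1 (C_n) = C_(n+1), all the C_n have the same measure d, and d > 0 for some
   c > 0 when m differs from the Dirac mass at 0.  Pick j with m{||x||_p^p <= j} > 1 - d/2;
   then each C_n meets this sublevel set in measure at least d/2, and integrating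
   sum_n c^p |W_n|^-p 1_(C_n ∩ {||x||_p^p <= j}) <= ||x||_p^p <= j against m yields
   sum_n |W_n|^-p <= 2 j / (c^p d). *)

Lemma nneseries_le_bound (R : realType) (u : nat -> R) m B :
  (forall n, 0 <= u n) -> (forall N, \sum_(m <= n < N) u n <= B) ->
  (\sum_(m <= n <oo) (u n)%:E <= B%:E)%E.
Proof.
move=> u_ge0 hB; apply: lime_le.
  by apply: is_cvg_nneseries => n _ _; rewrite lee_fin.
by apply: nearW => N; rewrite sumEFin lee_fin.
Qed.

Lemma powRV (R : realType) (a r : R) : 0 <= a -> a^-1 `^ r = (a `^ r)^-1.
Proof. by move=> a0; rewrite -powR_inv1 // -powRrM mulN1r powRN. Qed.

Definition wprod {K : nzRingType} (w : nat -> K) n := \prod_(1 <= k < n.+1) w k.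

Lemma wprod0 {K : nzRingType} (w : nat -> K) : wprod w 0 = 1.
Proof. by rewrite /wprod big_geq. Qed.

Lemma wprodS {K : nzRingType} (w : nat -> K) n : wprod w n.+1 = wprod w n * w n.+1.
Proof. by rewrite /wprod big_nat_recr. Qed.

Lemma wprod_neq0 {K : idomainType} (w : nat -> K) :
  (forall n, (1 <= n)%N -> w n != 0) -> forall n, wprod w n != 0.
Proof.
move=> hw; elim=> [|n IH]; first by rewrite wprod0 oner_neq0.
by rewrite wprodS mulf_neq0 // hw.
Qed.

Lemma dirac_preimage_fixed d (T : measurableType d) (R : realType) (f : T -> T) a A :
  f a = a -> (\d_a (f @^-1` A) = \d_a A :> \bar R).
Proof.
move=> fa; rewrite !diracE; congr ((_ : bool)%:R%:E).
by apply/idP/idP => /set_mem Aa; apply/mem_set; move: Aa; rewrite /preimage /= fa.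
Qed.

Section ProbabilityFacts.
Context {d : measure_display} {T : measurableType d} {R : realType}.
Variable m : probability T R.

Lemma measure_null_cover (F : nat -> set T) (Y : set T) :
  (forall n, measurable (F n)) -> (forall n, m (F n) = 0%E) ->
  measurable Y -> Y `<=` \bigcup_n F n -> m Y = 0%E.
Proof.
move=> mF F0 mY YF; apply: measure_negligible mY (negligibleS YF _).
by apply: negligible_bigcup => n; exists (F n); split; [exact: mF | exact: F0 |].
Qed.

Lemma probability_eq_dirac (a : T) :
  measurable (~` [set a]) -> m (~` [set a]) = 0%E ->
  forall A, measurable A -> m A = \d_a A.
Proof.
move=> ma ma0 A mA; rewrite diracE.
have null_sub B : measurable B -> B `<=` ~` [set a] -> m B = 0%E.
  move=> mB Ba; apply/le_anti; rewrite measure_ge0 andbT -ma0.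
  by rewrite le_measure ?inE.
have [/set_mem Aa|/negP nAa] := boolP (a \in A); last first.
  by apply: null_sub => // x Ax xa; apply: nAa; apply/mem_set; rewrite -xa.
have mAc0 : m (~` A) = 0%E.
  by apply: null_sub; [exact: measurableC mA | move=> x nAx xa; apply: nAx; rewrite xa].
rewrite -(measureU0 mA (measurableC mA) mAc0) setUv.
exact: probability_setT.
Qed.

Lemma probability_cover_gt (F : nat -> set T) (e : R) :
  (forall n, measurable (F n)) -> {homo F : i j / (i <= j)%N >-> (i <= j)%O} ->
  \bigcup_n F n = setT -> e < 1 -> exists j, (e%:E < m (F j))%E.
Proof.
move=> mF homoF FT e1.
have mF1 : (m \o F) x @[x --> \oo] --> 1%E.
  rewrite -(probability_setT m) -FT.
  exact: nondecreasing_cvg_mu mF (bigcupT_measurable _ mF) homoF.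
apply: contrapT => /forallNP noj.
have : (1 <= e%:E)%E.
  rewrite -(cvg_lim (@ereal_hausdorff R) mF1); apply: lime_le; first exact: cvgP mF1.
  by apply: nearW => j; rewrite /= leNgt; apply/negP/noj.
by rewrite lee_fin leNgt e1.
Qed.

Lemma probability_setI_ge (A G : set T) (a e : R) :
  measurable A -> measurable G -> m A = a%:E -> ((1 - e)%:E < m G)%E ->
  ((a - e)%:E <= m (A `&` G))%E.
Proof.
move=> mA mG mAa mGe.
have mfin C : measurable C -> m C = (fine (m C))%:E.
  by move=> mC; rewrite fineK // fin_num_measure.
have mAG : measurable (A `\` G) by exact: measurableD.
have : (m (A `\` G) <= m (~` G))%E by rewrite le_measure ?inE //; exact: measurableC.
have mAE : m A = (m (A `\` G) + m (A `&` G))%E by exact: measureDI.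
have mGC : m (~` G) = (1 - m G)%E by exact: probability_setC.
move: mGe mAE; rewrite mGC mAa (mfin _ mG) (mfin _ mAG) (mfin _ (measurableI _ _ mA mG)).
by rewrite -EFinD -EFinB !lte_fin !lee_fin => ? [=] ? ?; lra.
Qed.

Lemma sum_mul_measure_le (a : nat -> R) (A : nat -> set T) N B :
  (forall n, 0 <= a n) -> (forall n, measurable (A n)) ->
  (forall x, \sum_(0 <= n < N) a n * \1_(A n) x <= B) ->
  (\sum_(0 <= n < N) (a n)%:E * m (A n) <= B%:E)%E.
Proof.
move=> a0 mA hB.
have term_ge0 n x : (0 <= (a n * \1_(A n) x)%:E)%E.
  by rewrite lee_fin mulr_ge0 // indicE.
have measurable_term n : measurable_fun setT (fun x => (a n * \1_(A n) x)%:E).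
  by apply/measurable_EFinP/measurable_funM; [exact: measurable_cst | exact: measurable_indic].
have -> : (\sum_(0 <= n < N) (a n)%:E * m (A n) =
    \int[m]_x \sum_(0 <= n < N) (a n * \1_(A n) x)%:E)%E.
  rewrite ge0_integral_sum //; apply: eq_bigr => n _.
  under eq_integral do rewrite EFinM.
  rewrite ge0_integralZl_EFin //; last exact/measurable_EFinP/measurable_indic.
  by rewrite integral_indic // setIT.
rewrite -[leRHS]mule1 -(probability_setT m) -integral_cst //.
apply: ge0_le_integral => //.
- by move=> x _; apply: sume_ge0 => n _.
- exact: emeasurable_sum.
- by move=> x _; rewrite sumEFin lee_fin hB.
Qed.

End ProbabilityFacts.


Section LpSequences.
Variables (R : realType) (K : fieldType) (absv : K -> R).
Hypotheses (absv0 : absv 0 = 0) (absv1 : absv 1 = 1)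
  (absv_ge0 : forall x, 0 <= absv x)
  (absvM : forall x y, absv (x * y) = absv x * absv y)
  (absv_eq0 : forall x, absv x = 0 -> x = 0)
  (absvD : forall x y, absv (x + y) <= absv x + absv y)
  (absvN : forall x, absv (- x) = absv x).
Variables (p : R) (hp : 1 <= p).

Local Notation S := (@lp_sum R K absv p).
Local Notation X := (@lp_borel R K absv absv0 p hp).
Local Notation dist := (@lp_dist R K absv absv0 p hp).
Local Notation B := (@bshift R K absv absv0 p hp).
Local Notation zero := (@lp_zero R K absv absv0 p hp : X).

Lemma absv_gt0 a : a != 0 -> 0 < absv a.
Proof.
by move=> a0; rewrite lt_def absv_ge0 andbT; apply: contra a0 => /eqP/absv_eq0->.
Qed.

Lemma absvV a : a != 0 -> absv a^-1 = (absv a)^-1.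
Proof.
move=> a0; have absv_neq0 : absv a != 0 by rewrite gt_eqF // absv_gt0.
by apply: (mulfI absv_neq0); rewrite -absvM !mulfV.
Qed.

Lemma p_gt0 : 0 < p. Proof. exact: lt_le_trans ltr01 hp. Qed.

Lemma lp_sum_ge0 f : (0 <= S f)%E.
Proof. by apply: nneseries_ge0 => n _ _; rewrite lee_fin powR_ge0. Qed.

Lemma lp_sum_fineK f : in_lp absv p f -> S f = (fine (S f))%:E.
Proof. by move/asboolP=> Sf; rewrite fineK // ge0_fin_numE // lp_sum_ge0. Qed.

Lemma lp_partial_sum_le f N : in_lp absv p f ->
  \sum_(0 <= n < N) absv (f n) `^ p <= fine (S f).
Proof.
move=> hf; rewrite -lee_fin -lp_sum_fineK // -sumEFin.
by apply: nneseries_lim_ge => n _ _; rewrite lee_fin powR_ge0.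
Qed.

Lemma lp_term_le f n : in_lp absv p f -> absv (f n) `^ p <= fine (S f).
Proof.
move=> hf; apply: le_trans (lp_partial_sum_le _ n.+1 hf).
by rewrite big_nat_recr //= lerDr sumr_ge0 // => k _; rewrite powR_ge0.
Qed.

Lemma in_lp_bounded f B : (forall N, \sum_(0 <= n < N) absv (f n) `^ p <= B) ->
  in_lp absv p f.
Proof.
move=> hB; apply/asboolP; apply: le_lt_trans (ltry B).
by apply: nneseries_le_bound => // k; exact: powR_ge0.
Qed.

Lemma powR_absvB_le a b :
  absv (a - b) `^ p <= 2 `^ p * (absv a `^ p + absv b `^ p).
Proof.
set u := absv a; set v := absv b.
have [u0 v0] : 0 <= u /\ 0 <= v by split; apply: absv_ge0.
have absvB_le : absv (a - b) <= 2 * Num.max u v.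
  apply: le_trans (absvD _ _) _; rewrite absvN mulr_natl mulr2n.
  by apply: lerD; rewrite ?le_max lexx ?orbT.
apply: le_trans (ge0_ler_powR (ltW p_gt0) _ _ absvB_le) _.
- by rewrite nnegrE.
- by rewrite nnegrE mulr_ge0 // le_max u0.
rewrite powRM // ?le_max ?u0 //; apply: ler_wpM2l; first exact: powR_ge0.
by have [_|_] := leP u v; rewrite ?lerDr ?lerDl powR_ge0.
Qed.

Lemma in_lpB x y : in_lp absv p x -> in_lp absv p y ->
  in_lp absv p (fun n => x n - y n).
Proof.
move=> hx hy; apply: (@in_lp_bounded _ (2 `^ p * (fine (S x) + fine (S y)))) => N.
apply: le_trans (ler_sum _ (fun n _ => powR_absvB_le (x n) (y n))) _.
rewrite -mulr_sumr big_split /=; apply: ler_wpM2l; first exact: powR_ge0.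
by apply: lerD; apply: lp_partial_sum_le.
Qed.

Lemma lp_coord_le_dist (x y : X) n : absv (sval x n - sval y n) <= dist x y.
Proof.
have hxy := in_lpB _ _ (svalP x) (svalP y).
rewrite -[leLHS]powRr1 ?absv_ge0 // -(mulfV (lt0r_neq0 p_gt0)) powRrM.
apply: ge0_ler_powR; rewrite ?nnegrE ?invr_ge0 ?(ltW p_gt0) ?powR_ge0 //.
  by rewrite fine_ge0 // lp_sum_ge0.
exact: lp_term_le hxy.
Qed.

Lemma lp_open_coord_gt n t :
  @lp_open R K absv absv0 p hp [set x | t < absv (sval x n)].
Proof.
move=> x /= tx; exists (absv (sval x n) - t); split; first by rewrite subr_gt0.
move=> y /(le_lt_trans (lp_coord_le_dist x y n)).
have : absv (sval x n) <= absv (sval y n) + absv (sval x n - sval y n).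
  by rewrite -{1}(subrK (sval y n) (sval x n)) addrC absvD.
lra.
Qed.

Lemma measurable_coord n : measurable_fun [set: X] (fun x : X => absv (sval x n)).
Proof.
apply: (measurability _ (RGenOInfty.measurableE R)).
move=> /= _ [_ [t ->] <-]; rewrite setTI.
apply: sub_sigma_algebra => x /=; rewrite in_itv /= andbT => tx.
have [e [e0 he]] := lp_open_coord_gt n t x tx; exists e; split => // y /he.
by rewrite /= in_itv /= andbT.
Qed.

Lemma measurable_lp_sum : measurable_fun [set: X] (fun x : X => S (sval x)).
Proof.
apply: (@ge0_emeasurable_sum _ _ _ _ _ xpredT).
  by move=> k x _ _; rewrite lee_fin powR_ge0.
move=> k _; apply/measurable_EFinP.
exact: (measurableT_comp (measurable_powR p) (measurable_coord k)).
Qed.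

Lemma lp_val_inj (x y : X) : sval x = sval y -> x = y.
Proof.
by case: x y => [a ha] [b hb] /= eab; subst b; congr exist; exact: bool_irrelevance.
Qed.

Definition lp_sublevel (j : nat) := [set x : X | (S (sval x) <= j%:R%:E)%E].

Lemma measurable_lp_sublevel j : measurable (lp_sublevel j).
Proof.
by have := emeasurable_fun_infty_c measurableT measurable_lp_sum j%:R%:E; rewrite setTI.
Qed.

Lemma lp_sublevel_homo : {homo lp_sublevel : i j / (i <= j)%N >-> (i <= j)%O}.
Proof.
move=> i j ij; rewrite subsetEset => x /= /le_trans; apply.
by rewrite lee_fin ler_nat.
Qed.

Lemma bigcup_lp_sublevel : \bigcup_j lp_sublevel j = setT.
Proof.
apply/seteqP; split => // x _; exists (Num.truncn (fine (S (sval x)))).+1 => //.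
by rewrite /lp_sublevel /= (lp_sum_fineK _ (svalP x)) lee_fin ltW // truncnS_gt.
Qed.

Lemma bshiftE (w : nat -> K) M : (forall n, (1 <= n)%N -> absv (w n) <= M) ->
  forall (x : X) n, sval (B w x) n = w n.+1 * sval x n.+1.
Proof.
move=> w_bounded x n.
have M0 : 0 <= M by apply: le_trans (w_bounded 1%N isT).
have shift_in_lp : in_lp absv p (fun n => w n.+1 * sval x n.+1).
  apply: (@in_lp_bounded _ (M `^ p * fine (S (sval x)))) => N.
  apply: le_trans (_ : \sum_(0 <= k < N) M `^ p * absv (sval x k.+1) `^ p <= _).
    apply: ler_sum => k _; rewrite absvM powRM //; apply: ler_wpM2r; first exact: powR_ge0.
    by apply: ge0_ler_powR; rewrite ?nnegrE ?(ltW p_gt0) //; apply: w_bounded.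
  rewrite -mulr_sumr; apply: ler_wpM2l; first exact: powR_ge0.
  apply: le_trans (lp_partial_sum_le _ N.+1 (svalP x)).
  by rewrite big_nat_recl //= lerDr powR_ge0.
by rewrite /bshift /= insubdK.
Qed.


Section Sufficiency.
Variables (w : nat -> K) (M : R).
Hypotheses (w_neq0 : forall n, (1 <= n)%N -> w n != 0)
  (w_bounded : forall n, (1 <= n)%N -> absv (w n) <= M).

Lemma in_lp_inv_wprod :
  (\sum_(1 <= n <oo) ((absv (wprod w n) `^ p)^-1)%:E < +oo)%E ->
  in_lp absv p (fun n => (wprod w n)^-1).
Proof.
move=> fin_series.
have term_ge0 n : (0 <= ((absv (wprod w n) `^ p)^-1)%:E)%E.
  by rewrite lee_fin invr_ge0 powR_ge0.
have series_ge0 := nneseries_ge0 (fun n _ _ => term_ge0 n) (P := xpredT) (N := 1%N).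
have absv_inv n : absv (wprod w n)^-1 `^ p = (absv (wprod w n) `^ p)^-1.
  by rewrite absvV ?wprod_neq0 // powRV.
apply: (@in_lp_bounded _ (1 + fine (\sum_(1 <= n <oo) ((absv (wprod w n) `^ p)^-1)%:E))).
case=> [|N]; first by rewrite big_geq // addr_ge0 // fine_ge0.
rewrite big_ltn // absv_inv wprod0 absv1 powR1 invr1 lerD2l -lee_fin fineK; last first.
  by rewrite ge0_fin_numE.
under eq_bigr do rewrite absv_inv.
by rewrite -sumEFin; apply: nneseries_lim_ge => n _ _.
Qed.

Lemma bshift_inv_wprod (x : X) : sval x =1 (fun n => (wprod w n)^-1) ->
  B w x = x.
Proof.
move=> xE; apply: lp_val_inj; apply: funext => n.
by rewrite (bshiftE _ _ w_bounded) !xE wprodS invfM mulrA mulrAC mulfV ?w_neq0 ?mul1r.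
Qed.

Lemma bshift_invariant_dirac :
  (\sum_(1 <= n <oo) ((absv (wprod w n) `^ p)^-1)%:E < +oo)%E ->
  exists m : probability X R,
    (forall A, measurable A -> m (B w @^-1` A) = m A) /\
    (exists A, measurable A /\ m A <> \d_zero A).
Proof.
move=> fin_series; pose x : X := exist (fun f => in_lp absv p f) _ (in_lp_inv_wprod fin_series).
exists \d_x; split => [A _|]; first exact/dirac_preimage_fixed/bshift_inv_wprod.
exists ((fun y : X => absv (sval y 0)) @^-1` `]0, +oo[); split.
  by rewrite -[X in measurable X]setTI; exact: measurable_coord.
rewrite !diracE /= diracE mem_set /=; last by rewrite in_itv /= wprod0 invr1 absv1 ltr01.
rewrite memNset /=; last by rewrite in_itv /= absv0 ltxx.
by move=> /eqP; rewrite eqe oner_eq0.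
Qed.

End Sufficiency.

Section Necessity.
Variables (w : nat -> K) (M : R).
Hypotheses (w_neq0 : forall n, (1 <= n)%N -> w n != 0)
  (w_bounded : forall n, (1 <= n)%N -> absv (w n) <= M).
Variable m : probability X R.
Hypothesis m_invariant : forall A, measurable A -> m (B w @^-1` A) = m A.

Definition wcoord_gt c n := [set x : X | c < absv (wprod w n) * absv (sval x n)].

Lemma measurable_wcoord_gt c n : measurable (wcoord_gt c n).
Proof.
have -> : wcoord_gt c n = setT `&`
    ((fun=> absv (wprod w n)) \* (fun x : X => absv (sval x n))) @^-1` `]c, +oo[.
  by rewrite setTI; apply/seteqP; split => x /=; rewrite in_itv /= andbT.
exact: (measurable_funM (measurable_cst _) (measurable_coord n)).
Qed.

Lemma preimage_bshift_wcoord_gt c n : B w @^-1` wcoord_gt c n = wcoord_gt c n.+1.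
Proof.
rewrite predeqE => x.
by rewrite /wcoord_gt /= (bshiftE _ _ w_bounded) absvM mulrA -absvM -wprodS.
Qed.

Lemma measure_wcoord_gt c n : m (wcoord_gt c n) = m (wcoord_gt c 0).
Proof.
elim: n => [//|n IH].
by rewrite -preimage_bshift_wcoord_gt m_invariant //; exact: measurable_wcoord_gt.
Qed.

Lemma absv_wprod_gt0 n : 0 < absv (wprod w n).
Proof. exact/absv_gt0/wprod_neq0. Qed.

Lemma setC0_wcoord_gt : ~` [set zero] = \bigcup_n wcoord_gt 0 n.
Proof.
apply/seteqP; split => x /=; last first.
  by move=> [n _]; rewrite /wcoord_gt /= => + x0; rewrite x0 absv0 mulr0 ltxx.
move=> x_neq0; apply: contrapT => x_notin; apply: x_neq0.
apply: lp_val_inj; apply: funext => n /=; apply: contrapT => /eqP xn_neq0.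
by apply: x_notin; exists n => //; rewrite /wcoord_gt /= mulr_gt0 ?absv_wprod_gt0 ?absv_gt0.
Qed.

Lemma wcoord_gt0_bigcup n : wcoord_gt 0 n = \bigcup_k wcoord_gt k.+1%:R^-1 n.
Proof.
apply/seteqP; split => x /=; last first.
  by move=> [k _]; apply: lt_trans; rewrite invr_gt0 ltr0n.
move=> x_gt0; exists (Num.truncn (absv (wprod w n) * absv (sval x n))^-1) => //.
by rewrite /wcoord_gt /= invf_plt ?posrE ?ltr0n // truncnS_gt.
Qed.

Lemma exists_wcoord_gt_measure_neq0 :
  (exists A, measurable A /\ m A <> \d_zero A) ->
  exists k : nat, m (wcoord_gt k.+1%:R^-1 0) != 0%E.
Proof.
move=> [A [mA mA_neq]].
have m_wcoord_gt0 : m (wcoord_gt 0 0) != 0%E.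
  apply/eqP => m0; apply: mA_neq; apply: probability_eq_dirac mA.
    by rewrite setC0_wcoord_gt; exact: bigcupT_measurable (measurable_wcoord_gt 0).
  apply: (measure_null_cover m _ _ (measurable_wcoord_gt 0)) => [n||].
  - by rewrite measure_wcoord_gt.
  - by rewrite setC0_wcoord_gt; exact: bigcupT_measurable (measurable_wcoord_gt 0).
  - by rewrite setC0_wcoord_gt.
apply: contrapT => /forallNP none; move/eqP: m_wcoord_gt0; apply.
apply: (measure_null_cover m _ _ (fun k => measurable_wcoord_gt _ 0)) => [k||].
- by apply/eqP/negPn/negP; exact: none.
- exact: measurable_wcoord_gt.
- by rewrite wcoord_gt0_bigcup.
Qed.

Lemma powR_le_of_wcoord_gt c n x : 0 <= c -> wcoord_gt c n x ->
  c `^ p * (absv (wprod w n) `^ p)^-1 <= absv (sval x n) `^ p.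
Proof.
move=> c0 cx; rewrite mulrC ler_pdivrMl ?powR_gt0 ?absv_wprod_gt0 //.
rewrite -powRM ?absv_ge0 //; apply: ge0_ler_powR; rewrite ?nnegrE ?(ltW p_gt0) //.
  by rewrite mulr_ge0 ?absv_ge0.
exact: ltW.
Qed.

Lemma sum_measure_wcoord_gt_le c j N : 0 <= c ->
  (\sum_(0 <= n < N) (c `^ p * (absv (wprod w n) `^ p)^-1)%:E *
     m (wcoord_gt c n `&` lp_sublevel j) <= j%:R%:E)%E.
Proof.
move=> c0; apply: sum_mul_measure_le => [n|n|x].
- by rewrite mulr_ge0 ?invr_ge0 ?powR_ge0.
- exact: measurableI (measurable_wcoord_gt c n) (measurable_lp_sublevel j).
have [xj|xNj] := pselect (lp_sublevel j x); last first.
  by rewrite big1 // => n _; rewrite indicE memNset ?mulr0 // => -[].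
apply: le_trans (_ : \sum_(0 <= n < N) absv (sval x n) `^ p <= _); last first.
  apply: le_trans (lp_partial_sum_le _ N (svalP x)) _.
  by move: xj; rewrite /lp_sublevel /= (lp_sum_fineK _ (svalP x)) lee_fin.
apply: ler_sum => n _; rewrite indicE.
have [/set_mem [cx _]|_] := boolP (x \in _); last by rewrite mulr0 powR_ge0.
by rewrite mulr1 powR_le_of_wcoord_gt.
Qed.

Lemma invariant_series_finite :
  (exists A, measurable A /\ m A <> \d_zero A) ->
  (\sum_(1 <= n <oo) ((absv (wprod w n) `^ p)^-1)%:E < +oo)%E.
Proof.
move=> /exists_wcoord_gt_measure_neq0 [k mk_neq0].
set c : R := k.+1%:R^-1; have c_gt0 : 0 < c by rewrite invr_gt0 ltr0n.
set d := fine (m (wcoord_gt c 0)).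
have md : m (wcoord_gt c 0) = d%:E.
  by rewrite fineK // fin_num_measure //; exact: measurable_wcoord_gt.
have d_gt0 : 0 < d.
  rewrite lt_def -lee_fin -md measure_ge0 andbT.
  by apply: contra mk_neq0 => /eqP d0; rewrite md d0.
have [j mj] : exists j, ((1 - d / 2)%:E < m (lp_sublevel j))%E.
  apply: probability_cover_gt; rewrite ?gtrBl ?divr_gt0 //.
  - exact: measurable_lp_sublevel.
  - exact: lp_sublevel_homo.
  - exact: bigcup_lp_sublevel.
have m_wcoord_sublevel n : ((d / 2)%:E <= m (wcoord_gt c n `&` lp_sublevel j))%E.
  have := probability_setI_ge m _ _ _ _ (measurable_wcoord_gt c n) (measurable_lp_sublevel j)
    (etrans (measure_wcoord_gt c n) md) mj.
  by rewrite {1}(splitr d) addrK.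
have sum_le N : \sum_(0 <= n < N) (absv (wprod w n) `^ p)^-1 * (c `^ p * (d / 2))
    <= j%:R.
  rewrite -lee_fin -sumEFin; apply: le_trans (sum_measure_wcoord_gt_le c j N (ltW c_gt0)).
  apply: lee_sum => n _; rewrite mulrCA mulrA EFinM; apply: lee_wpmul2l => //.
  by rewrite lee_fin mulr_ge0 ?invr_ge0 ?powR_ge0.
have cd_gt0 : 0 < c `^ p * (d / 2) by rewrite mulr_gt0 ?powR_gt0 ?divr_gt0.
apply: le_lt_trans (ltry (j%:R / (c `^ p * (d / 2)))).
apply: nneseries_le_bound => [n|N]; first by rewrite invr_ge0 powR_ge0.
rewrite ler_pdivlMr // mulr_suml; apply: le_trans (sum_le N).
case: N => [|N]; first by rewrite !big_geq.
by rewrite [leRHS]big_ltn // lerDr mulr_ge0 ?invr_ge0 ?powR_ge0 ?ltW.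
Qed.

End Necessity.

Lemma bshift_nontrivial_invariant_iff (w : nat -> K) :
  (forall n, (1 <= n)%N -> w n != 0) ->
  (exists M, forall n, (1 <= n)%N -> absv (w n) <= M) ->
  (exists m : probability X R,
     (forall A, measurable A -> m (B w @^-1` A) = m A) /\
     (exists A, measurable A /\ m A <> \d_zero A)) <->
  (\sum_(1 <= n <oo) ((absv (wprod w n) `^ p)^-1)%:E < +oo)%E.
Proof.
move=> w_neq0 [M w_bounded]; split; last exact: (bshift_invariant_dirac _ _ w_neq0 w_bounded).
by move=> [m [m_inv m_neq]]; exact: (invariant_series_finite _ _ w_neq0 w_bounded _ m_inv m_neq).
Qed.

End LpSequences.


Theorem proposition2p1 (R : realType) (p : R) (hp : 1 <= p) :
  (* real scalars *)
  (forall w : nat -> R,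
     (forall n, (1 <= n)%N -> w n != 0) ->
     (exists M : R, forall n, (1 <= n)%N -> `|w n| <= M) ->
     ((exists m : probability (lpR hp) R,
         (forall A, measurable A -> m (bshift w @^-1` A) = m A) /\
         (exists A, measurable A /\ m A <> \d_(lp_zero (@normr0 R R) hp : lpR hp) A))
      <->
      (\sum_(1 <= n <oo) ((`|\prod_(1 <= k < n.+1) w k| `^ p)^-1)%:E < +oo)%E))
  /\
  (* complex scalars *)
  (forall w : nat -> R[i],
     (forall n, (1 <= n)%N -> w n != 0) ->
     (exists M : R, forall n, (1 <= n)%N -> Normc.normc (w n) <= M) ->
     ((exists m : probability (lpC hp) R,
         (forall A, measurable A -> m (bshift w @^-1` A) = m A) /\
         (exists A, measurable A /\ m A <> \d_(lp_zero (@Normc.normc0 R) hp : lpC hp) A))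
      <->
      (\sum_(1 <= n <oo)
          ((Normc.normc (\prod_(1 <= k < n.+1) w k) `^ p)^-1)%:E < +oo)%E)).
Proof.
split=> w w_neq0 w_bounded; apply: bshift_nontrivial_invariant_iff w_neq0 w_bounded.
- exact: normr1.
- exact: normr_ge0.
- exact: normrM.
- exact: normr0_eq0.
- exact: ler_normD.
- exact: normrN.
- exact: Normc.normc1.
- by case=> a b; exact: sqrtr_ge0.
- exact: Normc.normcM.
- exact: Normc.eq0_normc.
- exact: le_normcD.
- exact: normcN.
Qed.
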